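(* Let $G$ be a group generated by $r$ elements, let $\pi:(0,1]\to(0,1]$ be a non-decreasing function with $\pi(\gamma)\to0$ as $\gamma\to0$, let $M=(\mu_n)_{n=1}^\infty$ be a sequence of probability measures on $G$ that detects index uniformly at rate $\pi$, and suppose that $\textup{dc}_M(G)\ge\alpha>0$. Then $G$ has an abelian subgroup of index bounded by a quantity depending only on $r$, $\pi$ and $\alpha$.
   Context: A sequence $M=(\mu_n)$ of probability measures on $G$ detects index uniformly at rate $\pi$ if for every $\varepsilon>0$ there exists $N=N(\varepsilon)\in\mathbb{N}$ such that for every $m\in\mathbb{N}$ and every subgroup $H$ of $G$ with $[G:H]\ge m$ (including infinite index) we have $\mu_n(H)\le\pi(\frac{1}{m})+\varepsilon$ for every $n\ge N$. For a probability measure $\mu$ on $G$, $\textup{dc}_\mu(G)=(\mu\times\mu)(\{(x,y):xy=yx\})$, and $\textup{dc}_M(G)=\limsup_{n\to\infty}\textup{dc}_{\mu_n}(G)$. *)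

From HB Require Import structures.
From mathcomp Require Import all_boot all_order all_algebra.
From mathcomp Require Import all_classical all_reals all_analysis.
Set Implicit Arguments. Unset Strict Implicit. Unset Printing Implicit Defensive.
Import Order.TTheory GRing.Theory Num.Theory.
Local Open Scope classical_set_scope.
Local Open Scope ring_scope.

Section GroupDefs.
Context {T : choiceType} (mul : T -> T -> T) (one : T) (inv : T -> T).

Definition is_group : Prop :=
  [/\ forall x y z, mul x (mul y z) = mul (mul x y) z,
      forall x, mul one x = x &
      forall x, mul (inv x) x = one].

Definition subgroup (H : set T) : Prop :=
  [/\ H one, forall x y, H x -> H y -> H (mul x y) & forall x, H x -> H (inv x)].

Definition abelian_set (H : set T) : Prop :=
  forall x y, H x -> H y -> mul x y = mul y x.

Definition generated_by_r (r : nat) : Prop :=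
  exists gens : 'I_r -> T,
    forall S : set T, subgroup S -> (forall i, S (gens i)) -> forall x, S x.

Definition index_le (H : set T) (k : nat) : Prop :=
  exists g : 'I_k -> T, forall x, exists i, H (mul (inv (g i)) x).

(* [G : H] >= m (possibly infinite), for m >= 1 *)
Definition index_ge (H : set T) (m : nat) : Prop := ~ index_le H m.-1.
End GroupDefs.

Section MeasureDefs.
Context {R : realType} {T : choiceType}.

(* a probability measure on the (countable, discrete) group, via its mass function *)
Definition mass (mu : T -> R) (A : set T) : \bar R := \esum_(x in A) (mu x)%:E.

Definition is_prob (mu : T -> R) : Prop :=
  (forall x, 0 <= mu x) /\ mass mu setT = 1%E.

Definition dc (mul : T -> T -> T) (mu : T -> R) : \bar R :=
  \esum_(p in [set p : T * T | mul p.1 p.2 = mul p.2 p.1]) (mu p.1 * mu p.2)%:E.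

Definition dcM (mul : T -> T -> T) (M : nat -> T -> R) : \bar R :=
  limn_esup (fun n => dc mul (M n)).

Definition detects_index_uniformly (mul : T -> T -> T) (one : T) (inv : T -> T)
    (M : nat -> T -> R) (pi : R -> R) : Prop :=
  forall eps : R, 0 < eps -> exists N : nat,
    forall (m : nat), (0 < m)%N ->
    forall H : set T, subgroup mul one inv H -> index_ge mul inv H m ->
    forall n, (N <= n)%N -> (mass (M n) H <= (pi (1 / m%:R) + eps)%:E)%E.
End MeasureDefs.

Definition rate_function {R : realType} (pi : R -> R) : Prop :=
  [/\ forall x, 0 < x <= 1 -> 0 < pi x <= 1,
      forall x y, 0 < x -> x <= y -> y <= 1 -> pi x <= pi y &
      pi x @[x --> 0^'+] --> 0].

(* Pick k with pi(1/(k+1)) < alpha/8 and let X be the set of elements whose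
   centraliser has index at most k.  An element outside X commutes with mu_n-mass
   at most alpha/4 once n is large, so dc_{mu_n} <= mu_n(X) + alpha/4; as
   dc_{mu_n} > alpha/2 for infinitely many n, the subgroup <X> has mass above
   alpha/4, and uniform index detection forces [G : <X>] <= k.  Every x in X
   gives an action of G on the at most k cosets of its centraliser; in an
   r-generated group such an action is determined by finitely many data, so the
   common kernel K of all of them has index bounded in terms of r and k.  K lies
   in every centraliser of an element of X, hence centralises <X>, and
   K /\ <X> is the required abelian subgroup. *)

From mathcomp Require Import all_boot all_order all_algebra.
From mathcomp Require Import all_classical all_reals all_analysis.
From mathcomp Require Import lra.
Import Order.TTheory GRing.Theory Num.Theory.
Local Open Scope classical_set_scope.
Local Open Scope ring_scope.

Section EsumFacts.
Context {R : realType} {T : choiceType}.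
Local Open Scope ereal_scope.

Lemma esum_scale_le (A : set T) (f : T -> R) (c b : R) : (0 <= c)%R ->
  (forall y, 0 <= f y)%R -> \esum_(y in A) (f y)%:E <= b%:E ->
  \esum_(y in A) (c * f y)%:E <= (c * b)%:E.
Proof.
move=> c_ge0 f_ge0 sum_le; apply: ge_ereal_sup => _ [X [finX XA] <-].
have : \sum_(i \in X) (f i)%:E <= b%:E.
  by apply: le_trans sum_le; apply: ereal_sup_ubound; exists X.
rewrite !fsumEFin // !lee_fin -fsbig_distrr //=.
exact: ler_wpM2l.
Qed.

Lemma le_mass (mu : T -> R) {A B : set T} : A `<=` B -> mass mu A <= mass mu B.
Proof.
move=> AB; apply: ereal_sup_le => _ [X [finX XA] <-]; exists X => //.
by split => // x /XA /AB.
Qed.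

Lemma lt_limn_esup (u : (\bar R)^nat) (a : \bar R) N :
  a < limn_esup u -> exists2 n, (N <= n)%N & a < u n.
Proof.
move=> a_lt; apply: contrapT => no_n.
have u_le n : (N <= n)%N -> u n <= a.
  by move=> Nn; rewrite leNgt; apply/negP => a_lt_u; apply: no_n; exists n.
suff : limn_esup u <= a by rewrite leNgt a_lt.
rewrite limn_esup_lim; apply: lime_le; first exact: is_cvg_esups.
near=> m; apply: ge_ereal_sup => _ [j /= mj <-]; apply: u_le.
by apply: leq_trans mj; near: m; exists N.
Unshelve. all: by end_near.
Qed.

(* Fubini over the pairs: the inner sum over the centraliser of [x] is at most
   [mu x] when [x \in X] and at most [c * mu x] otherwise. *)
Lemma dc_le (mul : T -> T -> T) (mu : T -> R) (X : set T) (c : R) :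
  is_prob mu -> (0 <= c)%R ->
  (forall x, ~ X x -> mass mu [set y | mul x y = mul y x] <= c%:E) ->
  dc mul mu <= mass mu X + c%:E.
Proof.
move=> [mu_ge0 mu1] c_ge0 cent_le.
pose w x := if x \in X then 1%R else c.
have inner_le x : \esum_(y in [set y | mul x y = mul y x]) (mu x * mu y)%:E <=
    (mu x * (x \in X)%:R)%:E + (c * mu x)%:E.
  apply: (@le_trans _ _ (mu x * w x)%:E).
    apply: esum_scale_le => //; rewrite /w; case: ifPn => [_|].
      by rewrite -mu1; apply: le_mass.
    by rewrite notin_setE => /cent_le.
  rewrite -EFinD lee_fin /w; case: ifPn => _.
    by rewrite mulr1 lerDl mulr_ge0.
  by rewrite mulr0 add0r mulrC.
rewrite /dc; have -> : [set p : T * T | mul p.1 p.2 = mul p.2 p.1] =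
    setT `*`` (fun x => [set y | mul x y = mul y x]).
  by apply/seteqP; split => p /=; [move=> h; split|case].
rewrite -(esum_esum (a := fun x y => (mu x * mu y)%:E)); last first.
  by move=> x y _ _; rewrite lee_fin mulr_ge0.
apply: le_trans (le_esum (fun x _ => inner_le x)) _.
rewrite esumD; last 2 first.
- by move=> x _; rewrite lee_fin mulr_ge0.
- by move=> x _; rewrite lee_fin mulr_ge0.
apply: leeD.
  rewrite /mass [in leRHS]esum_mkcond.
  by apply: le_esum => x _; case: ifP; rewrite ?mulr1 ?mulr0.
rewrite -[c in leRHS]mulr1; apply: esum_scale_le => //.
by move: mu1; rewrite /mass => ->.
Qed.

End EsumFacts.

Lemma exists_inv_nat_lt {R : realType} {f : R -> R} {a : R} :
  f x @[x --> 0^'+] --> 0 -> 0 < a -> exists k : nat, f (k.+1%:R^-1) < a.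
Proof.
move=> f0 a_gt0; have [e /= e_gt0 fe] := @cvgr_lt R _ _ _ f 0 f0 a a_gt0.
exists (Num.truncn e^-1); apply: fe; last by rewrite invr_gt0.
rewrite /ball /= sub0r normrN ger0_norm ?invr_ge0 //.
by rewrite -[X in _ < X]invrK ltf_pV2 ?posrE ?invr_gt0 // truncnS_gt.
Qed.

Local Notation endo k := {ffun 'I_k -> 'I_k}.
Local Notation hom_code r k :=
  (endo k * {ffun 'I_r -> endo k} * {ffun 'I_r -> endo k})%type.

Definition kernel_bound (r k : nat) : nat := #|{ffun hom_code r k -> endo k}|.

Section Group.
Context {T : choiceType} {mul : T -> T -> T} {one : T} {inv : T -> T}.
Hypothesis groupT : is_group mul one inv.
Local Notation subgroup := (subgroup mul one inv).
Local Notation index_le := (index_le mul inv).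

Lemma mulgA x y z : mul x (mul y z) = mul (mul x y) z.
Proof. by case: groupT. Qed.

Lemma mul1g x : mul one x = x.
Proof. by case: groupT. Qed.

Lemma mulVg x : mul (inv x) x = one.
Proof. by case: groupT. Qed.

Lemma mulgV x : mul x (inv x) = one.
Proof.
rewrite -[mul x _]mul1g -[in mul one _](mulVg (inv x)).
by rewrite -mulgA [mul (inv x) (mul x _)]mulgA mulVg mul1g mulVg.
Qed.

Lemma mulg1 x : mul x one = x.
Proof. by rewrite -(mulVg x) mulgA mulgV mul1g. Qed.

Lemma mulgI x : injective (mul x).
Proof. by move=> y z e; rewrite -[y]mul1g -(mulVg x) -mulgA e mulgA mulVg mul1g. Qed.

Lemma invgK x : inv (inv x) = x.
Proof. by apply: (@mulgI (inv x)); rewrite mulgV mulVg. Qed.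

Lemma invgM x y : inv (mul x y) = mul (inv y) (inv x).
Proof.
apply: (@mulgI (mul x y)); rewrite mulgV.
by rewrite -mulgA [mul y (mul _ _)]mulgA mulgV mul1g mulgV.
Qed.

Lemma invg1 : inv one = one.
Proof. by rewrite -[inv one]mulg1 mulVg. Qed.

Definition centraliser (x : T) : set T := [set y | mul x y = mul y x].

Lemma subgroup_centraliser x : subgroup (centraliser x).
Proof.
split; rewrite /centraliser /=.
- by rewrite mul1g mulg1.
- by move=> a b xa xb; rewrite mulgA xa -mulgA xb mulgA.
- move=> a xa; rewrite -[RHS]mulg1 -(mulgV a) mulgA -[mul (mul (inv a) x) a]mulgA xa.
  by rewrite mulgA mulVg mul1g.
Qed.

Definition generated (X : set T) : set T :=
  [set y | forall S, subgroup S -> X `<=` S -> S y].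

Lemma subgroup_generated X : subgroup (generated X).
Proof.
split.
- by move=> S [].
- move=> a b Xa Xb S subS XS; case: (subS) => _ SM _.
  by apply: SM; [apply: Xa|apply: Xb].
- by move=> a Xa S subS XS; case: (subS) => _ _ SV; apply: SV; apply: Xa.
Qed.

Lemma sub_generated X : X `<=` generated X.
Proof. by move=> x Xx S _; apply. Qed.

Lemma subgroupI (A B : set T) : subgroup A -> subgroup B -> subgroup (A `&` B).
Proof.
move=> [A1 AM AV] [B1 BM BV]; split => //.
- by move=> u v [Au Bu] [Av Bv]; split; [apply: AM|apply: BM].
- by move=> u [Au Bu]; split; [apply: AV|apply: BV].
Qed.

Section Cosets.
Context {H : set T}.
Hypothesis subH : subgroup H.

Lemma coset_sym {u v} : H (mul (inv u) v) -> H (mul (inv v) u).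
Proof. by case: subH => _ _ HV /HV; rewrite invgM invgK. Qed.

Lemma coset_trans {u v w} :
  H (mul (inv u) v) -> H (mul (inv v) w) -> H (mul (inv u) w).
Proof.
case: subH => _ HM _ Huv Hvw; have := HM _ _ Huv Hvw.
by rewrite -mulgA [mul v (mul _ _)]mulgA mulgV mul1g.
Qed.

Lemma coset_mull h {u v} : H (mul (inv u) v) -> H (mul (inv (mul h u)) (mul h v)).
Proof. by rewrite invgM -mulgA [mul (inv h) (mul h v)]mulgA mulVg mul1g. Qed.

Lemma index_le_fibres (F : finType) (f : T -> F) :
  (forall x y, f x = f y -> H (mul (inv x) y)) -> index_le H #|F|.
Proof.
move=> f_coset.
have rep_ex (v : F) : exists y, (exists x, f x = v) -> f y = v.
  by case: (pselect (exists x, f x = v)) => [[x <-]|no_x]; [exists x|exists one].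
have [rep repP] := choice rep_ex.
exists (rep \o enum_val) => x; exists (enum_rank (f x)).
by rewrite /= enum_rankK; apply: f_coset; rewrite repP //; exists x.
Qed.

Section CosetAction.
Context {k : nat} {g : 'I_k -> T}.
Hypothesis gP : forall x, exists i, H (mul (inv (g i)) x).

Lemma coset_label_subproof x : exists i, `[< H (mul (inv (g i)) x) >].
Proof. by have [i Hi] := gP x; exists i; apply/asboolP. Qed.

Definition coset_label x : 'I_k := xchoose (coset_label_subproof x).

Lemma coset_labelP x : H (mul (inv (g (coset_label x))) x).
Proof. exact/asboolP/(xchooseP (coset_label_subproof x)). Qed.

Lemma eq_coset_label x y : coset_label x = coset_label y <-> H (mul (inv x) y).
Proof.
split => [e|Hxy].
  by apply: coset_trans (coset_sym (coset_labelP x)) _; rewrite e; apply: coset_labelP.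
apply: eq_xchoose => i; apply/asboolP/asboolP => Hi.
  exact: coset_trans Hi Hxy.
exact: coset_trans Hi (coset_sym Hxy).
Qed.

Definition coset_act h i := coset_label (mul h (g i)).

Lemma coset_actM h h' i : coset_act (mul h h') i = coset_act h (coset_act h' i).
Proof.
apply/esym/eq_coset_label; rewrite -mulgA.
exact/coset_mull/coset_labelP.
Qed.

Lemma coset_act_ker h : (forall i, coset_act h i = coset_act one i) -> H h.
Proof.
move=> act_h; pose g1 := g (coset_label one).
have H_g1 : H (mul (inv g1) one) := coset_labelP one.
have : H (mul (inv (mul h g1)) one).
  apply: coset_trans H_g1; apply/eq_coset_label.
  by rewrite [LHS]act_h /coset_act mul1g.
case: subH => _ HM HV; rewrite !mulg1 in H_g1 * => /HV; rewrite invgK => H_hg1.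
by rewrite -[h]mulg1 -(mulgV g1) mulgA; apply: HM.
Qed.

End CosetAction.
End Cosets.

Lemma index_le_setI (A B : set T) a b : subgroup A -> subgroup B ->
  index_le A a -> index_le B b -> index_le (A `&` B) (a * b).
Proof.
move=> subA subB [gA gAP] [gB gBP].
have -> : (a * b)%N = #|{: 'I_a * 'I_b}| by rewrite card_prod !card_ord.
apply: (index_le_fibres _ (fun x => (coset_label gAP x, coset_label gBP x))).
by move=> x y [/(eq_coset_label subA) Axy /(eq_coset_label subB) Bxy].
Qed.

Definition small_class (k : nat) : set T := [set x | index_le (centraliser x) k].

Section Generators.
Context {r : nat} {gens : 'I_r -> T}.
Hypothesis gensP : forall S, subgroup S -> (forall i, S (gens i)) -> forall x, S x.

(* The inverses of the generators are needed because [a one] need not be the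
   identity, so agreement is not obviously inherited by inverses. *)
Lemma hom_eq_on_gens (U : Type) (a b : T -> U -> U) :
  (forall h h' u, a (mul h h') u = a h (a h' u)) ->
  (forall h h' u, b (mul h h') u = b h (b h' u)) ->
  (forall u, a one u = b one u) ->
  (forall t u, a (gens t) u = b (gens t) u) ->
  (forall t u, a (inv (gens t)) u = b (inv (gens t)) u) ->
  forall h u, a h u = b h u.
Proof.
move=> aM bM ab1 ab_gens ab_invgens h.
pose S := [set h | (forall u, a h u = b h u) /\ (forall u, a (inv h) u = b (inv h) u)].
suff [] : S h by [].
apply: gensP => [|t]; last by split; [apply: ab_gens|apply: ab_invgens].
split.
- by split => // u; rewrite invg1.
- move=> x y [abx abVx] [aby abVy].
  by split => u; rewrite ?invgM aM bM ?abx ?aby ?abVx ?abVy.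
- by move=> x [abx abVx]; split => // u; rewrite invgK.
Qed.

Section CommonKernel.
Context {I : Type} {k : nat} (a : I -> T -> 'I_k -> 'I_k).
Hypothesis aM : forall i h h' j, a i (mul h h') j = a i h (a i h' j).

Definition common_kernel : set T := [set h | forall i j, a i h j = a i one j].

Lemma subgroup_common_kernel : subgroup common_kernel.
Proof.
have a1 i h j : a i h (a i one j) = a i h j by rewrite -aM mulg1.
split => [i j //|u v Ku Kv i j|u Ku i j].
  by rewrite aM Kv a1 Ku.
by rewrite -a1 -Ku -aM mulVg Ku.
Qed.

Definition hom_data (i : I) : hom_code r k :=
  ([ffun j => a i one j], [ffun t => [ffun j => a i (gens t) j]],
   [ffun t => [ffun j => a i (inv (gens t)) j]]).

Lemma hom_data_eq i i' : hom_data i = hom_data i' -> forall h j, a i h j = a i' h j.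
Proof.
move=> [e1 e2 e3]; apply: hom_eq_on_gens => // [j|t j|t j].
- by have := congr1 (fun f : endo k => f j) e1; rewrite !ffunE.
- by have := congr1 (fun f : {ffun 'I_r -> endo k} => f t j) e2; rewrite !ffunE.
- by have := congr1 (fun f : {ffun 'I_r -> endo k} => f t j) e3; rewrite !ffunE.
Qed.

(* Records the action of [h] under every member of the family, each member being
   named by its [hom_data]; codes naming no member get the junk value [id]. *)
Definition kernel_code (h : T) : {ffun hom_code r k -> endo k} :=
  [ffun d => if pselect (exists i, hom_data i = d) is left e
     then [ffun j => a (projT1 (cid e)) h j] else [ffun j => j]].

Lemma kernel_code_data h i : kernel_code h (hom_data i) = [ffun j => a i h j].
Proof.
rewrite ffunE; case: pselect => [e|[]]; last by exists i.
case: cid => i' /= /hom_data_eq e'; apply/ffunP => j; rewrite !ffunE.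
exact: e'.
Qed.

Lemma index_common_kernel : index_le common_kernel (kernel_bound r k).
Proof.
apply: (index_le_fibres _ kernel_code) => x y code_xy i j.
have axy : a i x j = a i y j.
  have := congr1 (fun f : {ffun hom_code r k -> endo k} => f (hom_data i) j) code_xy.
  by rewrite /= !kernel_code_data !ffunE.
by rewrite aM -axy -aM mulVg.
Qed.

End CommonKernel.

Lemma centralising_subgroup (X : set T) k :
  (forall x, X x -> index_le (centraliser x) k) ->
  exists K, [/\ subgroup K, index_le K (kernel_bound r k) &
    forall u x, K u -> X x -> mul x u = mul u x].
Proof.
move=> X_index.
have [reps repsP] := choice (fun i : {x | X x} => X_index _ (svalP i)).
pose a i := coset_act (repsP i).
exists (common_kernel a); split.
- by apply: subgroup_common_kernel => i; apply: coset_actM; apply: subgroup_centraliser.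
- by apply: index_common_kernel => i; apply: coset_actM; apply: subgroup_centraliser.
- move=> u x Ku Xx; pose i : {x | X x} := exist _ x Xx.
  exact: (coset_act_ker (subgroup_centraliser (sval i)) (repsP i) u (Ku i)).
Qed.

Lemma abelian_subgroup_index_le k :
  index_le (generated (small_class k)) k ->
  exists A, [/\ subgroup A, abelian_set mul A & index_le A (kernel_bound r k * k)].
Proof.
move=> gen_index.
have [K [subK K_index K_cent]] := @centralising_subgroup (small_class k) k (fun _ => id).
exists (K `&` generated (small_class k)); split.
- exact: subgroupI subK (subgroup_generated _).
- move=> u v [Ku _] [_ gen_v].
  by apply: gen_v (subgroup_centraliser u) _ => x Xx; apply/esym/K_cent.
- exact: index_le_setI subK (subgroup_generated _) K_index gen_index.
Qed.

End Generators.

Lemma index_generated_small_class {R : realType} {mu : T -> R} {k : nat} {c : R} :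
  is_prob mu -> 0 <= c ->
  (forall S, subgroup S -> index_ge mul inv S k.+1 -> (mass mu S <= c%:E)%E) ->
  ((c + c)%:E < dc mul mu)%E ->
  index_le (generated (small_class k)) k.
Proof.
move=> muP c_ge0 mass_le dc_gt; apply: contrapT => gen_large.
have mass_small : (mass mu (small_class k) <= c%:E)%E.
  apply: le_trans (le_mass mu (sub_generated _)) _.
  exact: mass_le (subgroup_generated _) gen_large.
have dc_le2c : (dc mul mu <= (c + c)%:E)%E.
  rewrite EFinD; apply: le_trans (leeD2r _ mass_small).
  exact: dc_le mul mu (small_class k) c muP c_ge0
    (fun x => mass_le _ (subgroup_centraliser x)).
by have := lt_le_trans dc_gt dc_le2c; rewrite ltxx.
Qed.

End Group.

Theorem theorem1p10 (R : realType) (r : nat) (pi : R -> R) (alpha : R) :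
  rate_function pi -> 0 < alpha ->
  exists B : nat,
    forall (T : choiceType) (mul : T -> T -> T) (one : T) (inv : T -> T),
      is_group mul one inv -> generated_by_r mul one inv r ->
      forall M : nat -> T -> R,
        (forall n, is_prob (M n)) ->
        detects_index_uniformly mul one inv M pi ->
        (alpha%:E <= dcM mul M)%E ->
        exists H : set T,
          [/\ subgroup mul one inv H, abelian_set mul H & index_le mul inv H B].
Proof.
move=> [_ _ pi_cvg0] alpha_gt0.
have alpha8_gt0 : 0 < alpha / 8 by rewrite divr_gt0.
have [k pik] := exists_inv_nat_lt pi_cvg0 alpha8_gt0.
exists (kernel_bound r k * k)%N => T mul one inv groupT [gens gensP] M M_prob detM dcM_ge.
have [N detN] := detM _ alpha8_gt0.
have [n Nn dcn] : exists2 n, (N <= n)%N & ((alpha / 4 + alpha / 4)%:E < dc mul (M n))%E.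
  by apply: lt_limn_esup; apply: lt_le_trans dcM_ge; rewrite lte_fin; lra.
apply: (abelian_subgroup_index_le groupT gensP).
apply: (index_generated_small_class groupT (M_prob n) _ _ dcn) => [|S subS Sk].
  by rewrite divr_ge0 // ltW.
apply: le_trans (detN k.+1 isT S subS Sk n Nn) _.
by rewrite lee_fin div1r; lra.
Qed.
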